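(* The assignment $\mathrm{L}:\mathbf{TArb}\to\mathbf{FinArb}^<_\star$ (defined below) is a well-defined functor: for every object $G$ of $\mathbf{TArb}$, $\mathrm{L}(G)$ is a finite edge-ordered arborescence, and for every morphism $h:G\to H$ of $\mathbf{TArb}$, $\mathrm{L}(h)$ is a homomorphism of pointed edge-ordered graphs $\mathrm{L}(G)\to\mathrm{L}(H)$; moreover $\mathrm{L}$ preserves identities and composition.
   Context: A (directed) graph is $(V,\to)$ with $\to\subseteq V\times V$; $N(u)$ is the set of outgoing edges of $u$. A pointed graph has a distinguished vertex $v_0$; connected means every vertex is reachable by a path from $v_0$. A path is a finite sequence $v_1\to\cdots\to v_n$ of vertices joined by edges, with length $|\pi|$; co-initial paths share their source; $\pi\sqsubset\sigma$ means $\pi$ is a proper prefix of $\sigma$. A finite edge-ordered graph is a finite graph with a strict linear order $\triangleleft$ on each neighborhood. Lexicographic path order: if $\pi\sqsubset\sigma$ then $\pi\prec\sigma$ (symmetrically); otherwise, with $\zeta$ the longest common prefix, $u$ its target and $v_1,v_2$ the next vertices, $\pi\prec\sigma$ iff $u\to v_1\triangleleft u\to v_2$. Shortlex: $\pi\prec^s\sigma$ iff $|\pi|<|\sigma|$ or ($|\pi|=|\sigma|$ and $\pi\prec\sigma$). A homomorphism of finite pointed edge-ordered graphs $h:G\to H$ is a vertex map with (i) $u\to v$ implies $h(u)\to h(v)$; (ii) the distinguished vertex of $G$ is the unique vertex mapped to the distinguished vertex of $H$; (iii) $u\to v_1\triangleleft u\to v_2$ implies $h(u)\to h(v_1)\triangleleft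 h(u)\to h(v_2)$. An arborescence is a pointed graph with a unique path $v_0\rightsquigarrow u$ for every $u$. $\mathbf{FinArb}^<_\star$: finite edge-ordered arborescences with homomorphisms of pointed edge-ordered graphs. $\mathbf{TArb}$: objects are finite, pointed, connected, edge-ordered graphs $G$ for which there is a finite, connected, pointed, edge-ordered arborescence $T$ on the same vertices with the same distinguished point such that the edge relation of $G$ is the transitive closure of that of $T$ and $u\to v_1\triangleleft u\to v_2$ in $G$ iff $(v_0\rightsquigarrow v_1)\prec^s(v_0\rightsquigarrow v_2)$ for the unique paths in $T$; in such $G$ longest paths $u\rightsquigarrow v$ are unique. Morphisms of $\mathbf{TArb}$ are homomorphisms satisfying (i)–(iii) that map the longest path $u\rightsquigarrow v$ to the longest path $h(u)\rightsquigarrow h(v)$. $\mathrm{L}(G)$ has the vertices and distinguished point of $G$, contains an edge $u\to v$ iff it lies on the longest path $v_0\rightsquigarrow v$ in $G$, with neighborhood order inherited from $G$; $\mathrm{L}(h)(v)=h(v)$. *)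

From mathcomp Require Import all_boot.
Set Implicit Arguments. Unset Strict Implicit. Unset Printing Implicit Defensive.

(* A finite pointed edge-ordered graph on a finite vertex type V.
   edge u v      : u -> v
   root          : the distinguished vertex v0
   eord u v1 v2  : u->v1 <| u->v2 (order on the neighbourhood of u) *)
Record peog (V : finType) := PEOG {
  edge : V -> V -> Prop;
  root : V;
  eord : V -> V -> V -> Prop }.

Section Defs.
Variable V : finType.

(* A path x -> p_1 -> ... -> p_n is represented by its source x and the
   sequence p of the remaining vertices; its length is size p. *)
Fixpoint is_walk (e : V -> V -> Prop) (x : V) (p : seq V) : Prop :=
  match p with
  | [::] => True
  | y :: p' => e x y /\ is_walk e y p'
  end.

Definition is_path_from_to (e : V -> V -> Prop) (u v : V) (p : seq V) : Prop :=
  is_walk e u p /\ last u p = v.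

Definition edge_ordered (G : peog V) : Prop :=
  forall u,
    (forall v1 v2, eord G u v1 v2 -> edge G u v1 /\ edge G u v2) /\
    (forall v, ~ eord G u v v) /\
    (forall v1 v2 v3, eord G u v1 v2 -> eord G u v2 v3 -> eord G u v1 v3) /\
    (forall v1 v2, edge G u v1 -> edge G u v2 -> v1 <> v2 ->
                   eord G u v1 v2 \/ eord G u v2 v1).

Definition connected (G : peog V) : Prop :=
  forall u, exists p, is_path_from_to (edge G) (root G) u p.

Definition is_arborescence (G : peog V) : Prop :=
  forall u, exists! p, is_path_from_to (edge G) (root G) u p.

Definition is_finarb (G : peog V) : Prop :=
  edge_ordered G /\ is_arborescence G.

Fixpoint lex_lt (o : V -> V -> V -> Prop) (u : V) (s t : seq V) : Prop :=
  match s, t with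
  | [::], [::] => False
  | [::], _ :: _ => True
  | _ :: _, [::] => False
  | x :: s', y :: t' => if x == y then lex_lt o x s' t' else o u x y
  end.

Definition shortlex_lt (o : V -> V -> V -> Prop) (u : V) (s t : seq V) : Prop :=
  size s < size t \/ (size s = size t /\ lex_lt o u s t).

Definition tclosure (e : V -> V -> Prop) (u v : V) : Prop :=
  exists p, p <> [::] /\ is_path_from_to e u v p.

Definition is_tarb (G : peog V) : Prop :=
  edge_ordered G /\ connected G /\
  exists T : peog V,
    is_finarb T /\ connected T /\ root T = root G /\
    (forall u v, edge G u v <-> tclosure (edge T) u v) /\
    (forall u v1 v2, edge G u v1 -> edge G u v2 ->
       forall p1 p2, is_path_from_to (edge T) (root T) v1 p1 ->
                     is_path_from_to (edge T) (root T) v2 p2 ->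
       (eord G u v1 v2 <-> shortlex_lt (eord T) (root T) p1 p2)).

Definition is_longest (G : peog V) (u v : V) (p : seq V) : Prop :=
  is_path_from_to (edge G) u v p /\
  forall q, is_path_from_to (edge G) u v q -> size q <= size p.

Definition L_edge (G : peog V) (u v : V) : Prop :=
  exists p, is_longest G (root G) v p /\ (u, v) \in zip (root G :: p) p.

Definition Lgraph (G : peog V) : peog V :=
  PEOG (L_edge G) (root G)
       (fun u v1 v2 => eord G u v1 v2 /\ L_edge G u v1 /\ L_edge G u v2).

End Defs.

Definition is_hom (V W : finType) (G : peog V) (H : peog W) (h : V -> W) : Prop :=
  (forall u v, edge G u v -> edge H (h u) (h v)) /\
  (forall x, h x = root H <-> x = root G) /\
  (forall u v1 v2, eord G u v1 v2 -> eord H (h u) (h v1) (h v2)).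

Definition tarb_mor (V W : finType) (G : peog V) (H : peog W) (h : V -> W) : Prop :=
  is_hom G H h /\
  (forall u v p, is_longest G u v p -> is_longest H (h u) (h v) (map h p)).

Definition Lmap (V W : finType) (h : V -> W) : V -> W := fun v => h v.

From Pilot Require Import Defs.
From mathcomp Require Import all_boot.
From mathcomp Require Import zify.

Set Implicit Arguments.
Unset Strict Implicit.
Unset Printing Implicit Defensive.

(* In an object G of TArb with generating tree T, every edge of G is a
   nonempty T-path, so refining a G-path into T-edges only lengthens it and
   keeps its endpoints.  Since T-paths from the root are unique, the longest
   G-path from the root to v is exactly the T-path to v; hence the edges of
   L(G) are those of T and L(G) is an arborescence.  A TArb morphism maps
   longest paths to longest paths and fixes the root, so it maps edges of
   L(G) to edges of L(H). *)

Section Walks.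
Variable V : finType.
Implicit Types (e f : V -> V -> Prop) (x y u v : V) (p q : seq V).

Lemma walk_impl e f : (forall u v, e u v -> f u v) ->
  forall x p, is_walk e x p -> is_walk f x p.
Proof. by move=> ef x p; elim: p x => //= y p IH x [/ef exy /IH]. Qed.

Lemma path_from_to_iff e f : (forall u v, e u v <-> f u v) ->
  forall x y p, is_path_from_to e x y p <-> is_path_from_to f x y p.
Proof.
move=> ef x y p; rewrite /is_path_from_to.
by split=> -[w l]; split=> //; apply: walk_impl w => u v /ef.
Qed.

Lemma walk_cat e x p q :
  is_walk e x (p ++ q) <-> is_walk e x p /\ is_walk e (last x p) q.
Proof. by elim: p x => [|y p IH] x /=; [tauto | rewrite IH; tauto]. Qed.

Lemma walk_rcons e x p y :
  is_walk e x (rcons p y) <-> is_walk e x p /\ e (last x p) y.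
Proof. by rewrite -cats1 walk_cat /=; tauto. Qed.

Lemma walk_zip_edge e x p u v :
  is_walk e x p -> (u, v) \in zip (x :: p) p -> e u v.
Proof.
elim: p x => //= y p IH x [exy w]; rewrite in_cons => /orP[/eqP[-> ->] //|].
exact: IH.
Qed.

Lemma last_edge_in_zip x p y :
  (last x p, y) \in zip (x :: rcons p y) (rcons p y).
Proof.
elim: p x => [|z p IH] x /=; first by rewrite mem_seq1.
by rewrite in_cons IH orbT.
Qed.

Lemma walk_tclosure_refine e f : (forall u v, e u v -> tclosure f u v) ->
  forall x p, is_walk e x p ->
  exists2 q, is_path_from_to f x (last x p) q &
    size p <= size q /\ (size q <= size p -> is_walk f x p).
Proof.
move=> ef x p; elim: p x => [|y p IH] x /=; first by exists [::].
move=> [/ef [s [s_nil [s_walk s_last]]] /IH [q [q_walk q_last] [le_pq eq_pq]]].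
exists (s ++ q); first by rewrite /is_path_from_to walk_cat last_cat s_last.
rewrite size_cat; case: s s_nil s_walk s_last => [//|a [|b s]] _ /=; last lia.
move=> [fxa _] ay; subst a.
by split=> [|le_qp]; [lia | split=> //; apply: eq_pq; lia].
Qed.

Lemma arborescence_eq_edges (A B : peog V) :
  Defs.root A = Defs.root B -> (forall u v, edge A u v <-> edge B u v) ->
  is_arborescence B -> is_arborescence A.
Proof.
move=> rAB eAB Barb u; have [t [t_path t_uniq]] := Barb u.
have pAB := path_from_to_iff eAB; rewrite rAB.
by exists t; split=> [|t' /pAB]; [apply/pAB | apply: t_uniq].
Qed.

Lemma edge_ordered_restrict (G : peog V) e :
  edge_ordered G -> (forall u v, e u v -> edge G u v) ->
  edge_ordered (PEOG e (Defs.root G)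
                  (fun u v1 v2 => eord G u v1 v2 /\ e u v1 /\ e u v2)).
Proof.
move=> Gord eG u /=; have [_ [irr [trans total]]] := Gord u.
split; first by move=> v1 v2 [_ []].
split; first by move=> v [/irr].
split.
  by move=> v1 v2 v3 [o12 [e1 _]] [o23 [_ e3]]; split; [exact: trans o23|].
by move=> v1 v2 e1 e2 /(total _ _ (eG _ _ e1) (eG _ _ e2)) [] o; [left | right].
Qed.

End Walks.

Section LongestPathsAreTreePaths.
Variables (V : finType) (G T : peog V).
Hypothesis T_arb : is_arborescence T.
Hypothesis root_TG : Defs.root T = Defs.root G.
Hypothesis edge_GT : forall u v, edge G u v <-> tclosure (edge T) u v.

Lemma tree_edge_edge u v : edge T u v -> edge G u v.
Proof. by move=> uv; apply/edge_GT; exists [:: v]. Qed.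

Let refine_to_tree := walk_tclosure_refine (fun u v => proj1 (edge_GT u v)).

Lemma tree_path_uniq v p q :
  is_path_from_to (edge T) (Defs.root G) v p ->
  is_path_from_to (edge T) (Defs.root G) v q -> p = q.
Proof.
have [t [_ t_uniq]] := T_arb v; rewrite -root_TG.
by move=> /t_uniq <- /t_uniq <-.
Qed.

Lemma tree_path_exists v : exists t, is_path_from_to (edge T) (Defs.root G) v t.
Proof. by have [t [t_path _]] := T_arb v; exists t; rewrite -root_TG. Qed.

Lemma tree_path_longest v t :
  is_path_from_to (edge T) (Defs.root G) v t -> is_longest G (Defs.root G) v t.
Proof.
move=> [t_walk t_last]; split.
  by split=> //; apply: walk_impl t_walk; apply: tree_edge_edge.
move=> q [/refine_to_tree [q' q'_path [le_qq' _]] q_last].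
rewrite q_last in q'_path.
by rewrite (tree_path_uniq (conj t_walk t_last) q'_path).
Qed.

Lemma longest_tree_path v p :
  is_longest G (Defs.root G) v p -> is_path_from_to (edge T) (Defs.root G) v p.
Proof.
move=> [[p_walk p_last] p_max]; have [t t_path] := tree_path_exists v.
have [q q_path [_ q_short]] := refine_to_tree p_walk; rewrite p_last in q_path.
have le_tp := p_max t (proj1 (tree_path_longest t_path)).
rewrite -(tree_path_uniq t_path q_path) in q_short.
by split=> //; apply: q_short.
Qed.

Lemma L_edgeE u v : L_edge G u v <-> edge T u v.
Proof.
split=> [[p [/longest_tree_path [p_walk _]]]|uv]; first exact: walk_zip_edge.
have [t [t_walk t_last]] := tree_path_exists u.
exists (rcons t v); split; last by rewrite -t_last last_edge_in_zip.
apply: tree_path_longest; split; last exact: last_rcons.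
by apply/walk_rcons; rewrite t_last.
Qed.

End LongestPathsAreTreePaths.

Lemma mem_zip_map (S R : eqType) (h : S -> R) s t u v :
  (u, v) \in zip s t -> (h u, h v) \in zip (map h s) (map h t).
Proof.
elim: s t => [|a s IH] [|b t] //=; rewrite !in_cons => /orP[/eqP[-> ->]|uv].
  by rewrite eqxx.
by rewrite IH ?orbT.
Qed.

Lemma Lgraph_finarb (V : finType) (G : peog V) :
  is_tarb G -> is_finarb (Lgraph G).
Proof.
move=> [G_ord [_ [T [[_ T_arb] [_ [root_TG [edge_GT _]]]]]]].
have LE := L_edgeE T_arb root_TG edge_GT.
split.
  by apply: edge_ordered_restrict G_ord _ => u v /LE /(tree_edge_edge edge_GT).
by apply: arborescence_eq_edges T_arb; [rewrite root_TG | exact: LE].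
Qed.

Lemma L_edge_map (V W : finType) (G : peog V) (H : peog W) (h : V -> W) :
  h (Defs.root G) = Defs.root H ->
  (forall u v p, is_longest G u v p -> is_longest H (h u) (h v) (map h p)) ->
  forall u v, L_edge G u v -> L_edge H (h u) (h v).
Proof.
move=> h_root h_longest u v [p [p_longest uv]]; exists (map h p).
by rewrite -h_root -map_cons; split; [exact: h_longest | exact: mem_zip_map].
Qed.

Lemma Lmap_hom (V W : finType) (G : peog V) (H : peog W) (h : V -> W) :
  tarb_mor G H h -> is_hom (Lgraph G) (Lgraph H) (Lmap h).
Proof.
move=> [[_ [h_root h_ord]] h_longest].
have LE := L_edge_map (proj2 (h_root _) erefl) h_longest.
split; first exact: LE; split; first exact: h_root.
by move=> u v1 v2 [o12 [e1 e2]]; split; [exact: h_ord | split; exact: LE].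
Qed.

Theorem lemma10p7 :
  (forall (V : finType) (G : peog V), is_tarb G -> is_finarb (Lgraph G)) /\
  (forall (V W : finType) (G : peog V) (H : peog W) (h : V -> W),
      is_tarb G -> is_tarb H -> tarb_mor G H h ->
      is_hom (Lgraph G) (Lgraph H) (Lmap h)) /\
  (forall (V : finType) (G : peog V), is_tarb G ->
      Lmap (fun x : V => x) =1 (fun x : V => x)) /\
  (forall (U V W : finType) (F : peog U) (G : peog V) (H : peog W)
          (h : U -> V) (g : V -> W),
      is_tarb F -> is_tarb G -> is_tarb H ->
      tarb_mor F G h -> tarb_mor G H g ->
      Lmap (g \o h) =1 Lmap g \o Lmap h).
Proof.
split; first exact: Lgraph_finarb.
split; first by move=> V W G H h _ _; exact: Lmap_hom.
by split.
Qed.
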